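(* Let $\Omega\subset\mathbb{R}^N$ be a bounded domain, $\delta>0$, and let $G$ be a domain with $\overline G\subset\Omega$, $\partial G\in C^1$, $G$ satisfying the interior sphere condition and $\partial G=\Gamma_\delta$. Then: (i) $\Omega=G+B_\delta(0)=\{x+y: x\in G,\ y\in B_\delta(0)\}$; (ii) for any unit vector $\xi$ and $\lambda\in\mathbb{R}$, if $\mathcal{R}_\lambda(G_\lambda)\subset G$ then $\mathcal{R}_\lambda(\Omega_\lambda)\subset\Omega$.
   Context: $d(x)=\min_{y\in\mathbb{R}^N\setminus\Omega}|x-y|$ and $\Gamma_\delta=\{x\in\Omega:d(x)=\delta\}$. For a unit vector $\xi$ and $\lambda\in\mathbb{R}$, $\mathcal{R}_\lambda x=x+2(\lambda-x\cdot\xi)\xi$ is the reflection in the hyperplane $\{x\cdot\xi=\lambda\}$, and $G_\lambda=\{x\in G: x\cdot\xi>\lambda\}$, $\Omega_\lambda=\{x\in\Omega: x\cdot\xi>\lambda\}$. *)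

From Stdlib Require Import Reals.
From Stdlib Require Fin.
Open Scope R_scope.

Definition vec (N : nat) : Type := Fin.t N -> R.

Fixpoint sumF (N : nat) : (Fin.t N -> R) -> R :=
  match N with
  | O => fun _ => 0
  | S n => fun f => f Fin.F1 + sumF n (fun i => f (Fin.FS i))
  end.

Definition vadd {N} (x y : vec N) : vec N := fun i => x i + y i.
Definition vsub {N} (x y : vec N) : vec N := fun i => x i - y i.
Definition vscale {N} (a : R) (x : vec N) : vec N := fun i => a * x i.
Definition dot {N} (x y : vec N) : R := sumF N (fun i => x i * y i).
Definition norm {N} (x : vec N) : R := sqrt (dot x x).
Definition dist {N} (x y : vec N) : R := norm (vsub x y).

Definition ball {N} (c : vec N) (r : R) : vec N -> Prop := fun x => dist x c < r.

Definition is_open {N} (U : vec N -> Prop) : Prop :=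
  forall x, U x -> exists r, 0 < r /\ forall y, ball x r y -> U y.

Definition is_connected {N} (A : vec N -> Prop) : Prop :=
  ~ (exists U V : vec N -> Prop,
        is_open U /\ is_open V /\
        (forall x, A x -> U x \/ V x) /\
        (exists x, A x /\ U x) /\ (exists x, A x /\ V x) /\
        (forall x, A x -> U x -> V x -> False)).

Definition is_domain {N} (A : vec N -> Prop) : Prop :=
  is_open A /\ (exists x, A x) /\ is_connected A.

Definition is_bounded {N} (A : vec N -> Prop) : Prop :=
  exists M, forall x, A x -> norm x <= M.

Definition closure {N} (A : vec N -> Prop) : vec N -> Prop :=
  fun x => forall eps, 0 < eps -> exists y, A y /\ dist x y < eps.

Definition boundary {N} (A : vec N -> Prop) : vec N -> Prop :=
  fun x => closure A x /\ closure (fun y => ~ A y) x.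

Definition continuous_on_v {N} (U : vec N -> Prop) (g : vec N -> vec N) : Prop :=
  forall x, U x -> forall eps, 0 < eps -> exists d, 0 < d /\
    forall y, U y -> dist y x < d -> dist (g y) (g x) < eps.

Definition C1_on {N} (U : vec N -> Prop) (rho : vec N -> R) (grad : vec N -> vec N)
  : Prop :=
  continuous_on_v U grad /\
  forall x, U x -> forall eps, 0 < eps -> exists d, 0 < d /\
    forall h, norm h < d ->
      Rabs (rho (vadd x h) - rho x - dot (grad x) h) <= eps * norm h.

Definition C1_boundary {N} (G : vec N -> Prop) : Prop :=
  forall p, boundary G p -> exists r rho grad,
    0 < r /\ C1_on (ball p r) rho grad /\
    (forall x, ball p r x -> rho x = 0 -> grad x <> (fun _ => 0)) /\
    (forall x, ball p r x -> (G x <-> rho x < 0)).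

Definition interior_sphere {N} (G : vec N -> Prop) : Prop :=
  forall p, boundary G p -> exists c r,
    0 < r /\ (forall x, ball c r x -> G x) /\ dist p c = r.

Definition dist_compl_eq {N} (Omega : vec N -> Prop) (x : vec N) (delta : R) : Prop :=
  (exists y, ~ Omega y /\ dist x y = delta) /\
  (forall y, ~ Omega y -> delta <= dist x y).

Definition Gamma {N} (Omega : vec N -> Prop) (delta : R) : vec N -> Prop :=
  fun x => Omega x /\ dist_compl_eq Omega x delta.

Definition refl {N} (xi : vec N) (lambda : R) (x : vec N) : vec N :=
  vadd x (vscale (2 * (lambda - dot x xi)) xi).

Definition cap_part {N} (A : vec N -> Prop) (xi : vec N) (lambda : R) : vec N -> Prop :=
  fun x => A x /\ dot x xi > lambda.

From Stdlib Require Import Reals Lra Lia Psatz.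
From Stdlib Require Import FunctionalExtensionality ClassicalEpsilon Classical.
From Stdlib Require Rtopology.
(* imported after Reals, whose [dist] it must shadow *)
Open Scope R_scope.

(* Write collar = G + B_delta(0).  The proof has three geometric steps.
   - collar ⊂ Omega: a segment from a point of G to a point outside Omega
     crosses the boundary of G, i.e. Gamma_delta, too close to its endpoint.
   - Points of Omega off the collar have a neighbourhood off the collar: by
     compactness the distance delta from such a point y to G is attained at
     a boundary point p; the interior ball of G at p and the point outside
     Omega at distance delta from p then force y onto the ray through p at
     distance delta (equality in Cauchy-Schwarz), i.e. y is that outside point.
   - Connectedness of Omega then gives Omega = collar, which is (i); and
     reflection, being an isometry which moves points of the cap closer to
     the opposite half-space, maps the cap of the collar into the collar (ii). *)

Ltac vec_ext :=
  apply functional_extensionality; intro; unfold vadd, vsub, vscale; cbv beta; ring.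

Lemma sumF_ext N (f g : Fin.t N -> R) :
  (forall i, f i = g i) -> sumF N f = sumF N g.
Proof.
  induction N as [|N IH]; intro Hfg; simpl; [reflexivity|].
  rewrite Hfg, (IH (fun i => f (Fin.FS i)) (fun i => g (Fin.FS i))); auto.
Qed.

Lemma sumF_plus N (f g : Fin.t N -> R) :
  sumF N (fun i => f i + g i) = sumF N f + sumF N g.
Proof. induction N as [|N IH]; simpl; [ring|]. rewrite IH. ring. Qed.

Lemma sumF_scal N (a : R) (f : Fin.t N -> R) :
  sumF N (fun i => a * f i) = a * sumF N f.
Proof. induction N as [|N IH]; simpl; [ring|]. rewrite IH. ring. Qed.

Lemma sumF_nonneg N (f : Fin.t N -> R) :
  (forall i, 0 <= f i) -> 0 <= sumF N f.
Proof.
  induction N as [|N IH]; intro Hf; simpl; [lra|].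
  pose proof (Hf Fin.F1). pose proof (IH (fun i => f (Fin.FS i)) (fun i => Hf _)). lra.
Qed.

Lemma sumF_eq0 N (f : Fin.t N -> R) :
  (forall i, 0 <= f i) -> sumF N f = 0 -> forall i, f i = 0.
Proof.
  induction N as [|N IH]; intros Hf Hsum i; [inversion i|].
  simpl in Hsum. pose proof (Hf Fin.F1).
  pose proof (sumF_nonneg N (fun i => f (Fin.FS i)) (fun i => Hf _)).
  apply (Fin.caseS' i (fun i => f i = 0)); [lra|].
  intro j. apply (IH (fun i => f (Fin.FS i))); [auto|lra].
Qed.

Lemma dot_sym N (x y : vec N) : dot x y = dot y x.
Proof. apply sumF_ext. intro; ring. Qed.

Lemma dot_addl N (x y z : vec N) : dot (vadd x y) z = dot x z + dot y z.
Proof. unfold dot. rewrite <- sumF_plus. apply sumF_ext. intro; unfold vadd; ring. Qed.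

Lemma dot_scalel N a (x y : vec N) : dot (vscale a x) y = a * dot x y.
Proof. unfold dot. rewrite <- sumF_scal. apply sumF_ext. intro; unfold vscale; ring. Qed.

Lemma dot_scaler N a (x y : vec N) : dot x (vscale a y) = a * dot x y.
Proof. rewrite dot_sym, dot_scalel, dot_sym. reflexivity. Qed.

Lemma dot_subl N (x y z : vec N) : dot (vsub x y) z = dot x z - dot y z.
Proof.
  replace (vsub x y) with (vadd x (vscale (-1) y)) by vec_ext.
  rewrite dot_addl, dot_scalel. ring.
Qed.

Lemma dot_nonneg N (x : vec N) : 0 <= dot x x.
Proof. apply sumF_nonneg. intro; nra. Qed.

Lemma dot_eq0 N (x : vec N) : dot x x <= 0 -> x = (fun _ => 0).
Proof.
  intro Hx. apply functional_extensionality. intro i.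
  pose proof (dot_nonneg N x).
  pose proof (sumF_eq0 N (fun i => x i * x i) (fun i => Rle_0_sqr (x i)) ltac:(fold (dot x x); lra) i).
  simpl in *. nra.
Qed.

Lemma dot_add_sq N (x y : vec N) :
  dot (vadd x y) (vadd x y) = dot x x + 2 * dot x y + dot y y.
Proof. rewrite !dot_addl, (dot_sym N x (vadd x y)), (dot_sym N y (vadd x y)), !dot_addl, (dot_sym N y x). ring. Qed.

Lemma dot_sub_sq N (x y : vec N) :
  dot (vsub x y) (vsub x y) = dot x x - 2 * dot x y + dot y y.
Proof.
  rewrite !dot_subl, (dot_sym N x (vsub x y)), (dot_sym N y (vsub x y)), !dot_subl, (dot_sym N y x).
  ring.
Qed.

Lemma norm_nonneg N (x : vec N) : 0 <= norm x.
Proof. apply sqrt_pos. Qed.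

Lemma norm_sq N (x : vec N) : norm x * norm x = dot x x.
Proof. apply sqrt_sqrt, dot_nonneg. Qed.

Lemma norm_scale N a (x : vec N) : norm (vscale a x) = Rabs a * norm x.
Proof.
  unfold norm. rewrite <- sqrt_Rsqr_abs, <- sqrt_mult_alt by apply Rle_0_sqr.
  f_equal. rewrite dot_scalel, dot_scaler. unfold Rsqr. ring.
Qed.

Lemma cauchy_schwarz N (x y : vec N) : dot x y <= norm x * norm y.
Proof.
  pose proof (norm_sq N x) as Hx. pose proof (norm_sq N y) as Hy.
  pose proof (norm_nonneg N x). pose proof (norm_nonneg N y).
  destruct (Req_dec (dot y y) 0) as [Hy0|Hy0].
  - assert (Ey : y = (fun _ => 0)) by (apply dot_eq0; lra).
    assert (Ezero : y = vscale 0 x) by (rewrite Ey; vec_ext).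
    assert (dot x y = 0) by (rewrite Ezero, dot_sym, dot_scalel; ring). nra.
  - (* expand |(y.y) x - (x.y) y|^2 = (y.y) ((x.x)(y.y) - (x.y)^2) >= 0 *)
    pose proof (dot_nonneg N (vsub (vscale (dot y y) x) (vscale (dot x y) y))) as Hq.
    rewrite dot_sub_sq, !dot_scalel, !dot_scaler in Hq.
    assert (Hsq : dot x y * dot x y <= dot x x * dot y y).
    { pose proof (dot_nonneg N y). assert (0 < dot y y) by lra.
      apply (Rmult_le_reg_l (dot y y)); [lra|]. nra. }
    rewrite <- Hx, <- Hy in Hsq.
    assert (0 <= norm x * norm y) by (apply Rmult_le_pos; assumption).
    clear Hq Hx Hy. nra.
Qed.

Lemma cauchy_schwarz_eq N (x y : vec N) a b :
  norm x = a -> norm y = b -> a * b <= dot x y -> vscale b x = vscale a y.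
Proof.
  intros Hx Hy Hxy.
  pose proof (norm_sq N x) as Hxx. pose proof (norm_sq N y) as Hyy.
  rewrite Hx in Hxx. rewrite Hy in Hyy.
  assert (Hab : 0 <= a * b) by (subst; apply Rmult_le_pos; apply norm_nonneg).
  assert (Hzero : vsub (vscale b x) (vscale a y) = (fun _ => 0)).
  { apply dot_eq0. rewrite dot_sub_sq, !dot_scalel, !dot_scaler.
    rewrite <- Hxx, <- Hyy. nra. }
  apply functional_extensionality. intro i.
  apply (f_equal (fun v => v i)) in Hzero. unfold vsub in Hzero. lra.
Qed.

Lemma norm_triangle N (x y : vec N) : norm (vadd x y) <= norm x + norm y.
Proof.
  pose proof (cauchy_schwarz N x y).
  pose proof (norm_sq N x). pose proof (norm_sq N y). pose proof (norm_sq N (vadd x y)).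
  pose proof (norm_nonneg N x). pose proof (norm_nonneg N y).
  pose proof (norm_nonneg N (vadd x y)).
  rewrite dot_add_sq in *. nra.
Qed.

Lemma dist_nonneg N (x y : vec N) : 0 <= dist x y.
Proof. apply norm_nonneg. Qed.

Lemma dist_refl N (x : vec N) : dist x x = 0.
Proof.
  unfold dist. replace (vsub x x) with (vscale 0 x) by vec_ext.
  rewrite norm_scale, Rabs_R0. ring.
Qed.

Lemma dist_sym N (x y : vec N) : dist x y = dist y x.
Proof.
  unfold dist. replace (vsub y x) with (vscale (-1) (vsub x y)) by vec_ext.
  rewrite norm_scale, Rabs_left by lra. ring.
Qed.

Lemma dist_triangle N (x y z : vec N) : dist x z <= dist x y + dist y z.
Proof.
  unfold dist. replace (vsub x z) with (vadd (vsub x y) (vsub y z)) by vec_ext.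
  apply norm_triangle.
Qed.

Lemma dist_vadd_l N (x y : vec N) : dist (vadd x y) x = dist y (fun _ => 0).
Proof. unfold dist. f_equal. vec_ext. Qed.

Definition seg {N} (a b : vec N) (t : R) : vec N := vadd a (vscale t (vsub b a)).

Lemma seg_0 N (a b : vec N) : seg a b 0 = a.
Proof. unfold seg. vec_ext. Qed.

Lemma seg_1 N (a b : vec N) : seg a b 1 = b.
Proof. unfold seg. vec_ext. Qed.

Lemma dist_seg N (a b : vec N) s t :
  dist (seg a b s) (seg a b t) = Rabs (s - t) * dist b a.
Proof.
  unfold dist, seg. rewrite <- norm_scale. f_equal. vec_ext.
Qed.

Lemma seg_near N (a b : vec N) s t eps :
  0 < eps -> Rabs (s - t) < eps / (dist b a + 1) -> dist (seg a b s) (seg a b t) < eps.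
Proof.
  intros Heps Hst. rewrite dist_seg. pose proof (dist_nonneg N b a).
  pose proof (Rabs_pos (s - t)).
  apply (Rmult_lt_compat_r (dist b a + 1)) in Hst; [|lra].
  unfold Rdiv in Hst. rewrite Rmult_assoc, Rinv_l, Rmult_1_r in Hst by lra. nra.
Qed.

(** [B_{r+d}(c) = B_r(c) + B_d(0)]: split a point of the big ball on the ray from [c]. *)
Lemma ball_sum N (c w : vec N) r d :
  0 < r -> 0 < d -> dist w c < r + d -> exists g, dist g c < r /\ dist w g < d.
Proof.
  intros Hr Hd Hw. set (t := r / (r + d)).
  assert (Ht : 0 <= t <= 1) by (unfold t; split;
    [apply Rmult_le_pos; [lra|left; apply Rinv_0_lt_compat; lra]
    |apply Rmult_le_reg_r with (r + d); [lra|]; unfold Rdiv; rewrite Rmult_assoc, Rinv_l; lra]).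
  exists (seg c w t). split.
  - rewrite <- (seg_0 N c w) at 2. rewrite dist_seg, Rminus_0_r, Rabs_right by lra.
    unfold t. apply Rmult_lt_reg_l with (r + d); [lra|].
    field_simplify; [|lra]. pose proof (dist_nonneg N w c). nra.
  - rewrite <- (seg_1 N c w) at 1. rewrite dist_seg, Rabs_right by lra.
    unfold t. apply Rmult_lt_reg_l with (r + d); [lra|].
    field_simplify; [|lra]. pose proof (dist_nonneg N w c). nra.
Qed.

Definition increasing_seq (phi : nat -> nat) : Prop := forall k, (phi k < phi (S k))%nat.

Definition converges_to {N} (u : nat -> vec N) (l : vec N) : Prop :=
  forall eps, 0 < eps -> exists K, forall k, (K <= k)%nat -> dist (u k) l < eps.

Lemma increasing_seq_ge phi : increasing_seq phi -> forall k, (k <= phi k)%nat.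
Proof. intros Hphi k. induction k as [|k IH]; [lia|]. specialize (Hphi k). lia. Qed.

Lemma increasing_seq_comp phi psi :
  increasing_seq phi -> increasing_seq psi -> increasing_seq (fun k => phi (psi k)).
Proof.
  intros Hphi Hpsi k.
  assert (Hmono : forall a b, (a < b)%nat -> (phi a < phi b)%nat).
  { intros a b Hab. induction Hab as [|b _ IH]; [apply Hphi|]. specialize (Hphi b). lia. }
  apply Hmono, Hpsi.
Qed.

Lemma inv_succ_small eps : 0 < eps -> exists K, forall k, (K <= k)%nat -> / INR (S k) < eps.
Proof.
  intro Heps. destruct (archimed_cor1 eps Heps) as [K [HK HK0]].
  exists K. intros k Hk. eapply Rle_lt_trans; [|exact HK].
  apply Rinv_le_contravar; [apply lt_0_INR; exact HK0|apply le_INR; lia].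
Qed.

Lemma bolzano_weierstrass_R (a : nat -> R) M : (forall n, Rabs (a n) <= M) ->
  exists phi l, increasing_seq phi /\ forall k, Rabs (a (phi k) - l) < / INR (S k).
Proof.
  intro HM.
  destruct (Rtopology.Bolzano_Weierstrass a (fun c => -M <= c <= M) (Rtopology.compact_P3 _ _))
    as [l Hl].
  { intro n. specialize (HM n). pose proof (Rle_abs (a n)). pose proof (Rle_abs (- a n)).
    rewrite Rabs_Ropp in *. lra. }
  assert (Hnear : forall nk : nat * nat, exists p,
            (fst nk <= p)%nat /\ Rabs (a p - l) < / INR (S (snd nk))).
  { intros [n0 k]. assert (Hpos : 0 < / INR (S k)) by (apply Rinv_0_lt_compat, lt_0_INR; lia).
    destruct (Hl (Rtopology.disc l (mkposreal _ Hpos)) n0) as [p [Hp1 Hp2]].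
    - exists (mkposreal _ Hpos). intros y Hy; exact Hy.
    - exists p. split; [exact Hp1|exact Hp2]. }
  destruct (choice _ Hnear) as [pick Hpick].
  set (phi := fix phi k := match k with
                           | O => pick (O, O)
                           | S k => pick (S (phi k), S k) end).
  exists phi, l. split.
  - intro k. simpl. destruct (Hpick (S (phi k), S k)) as [Hge _]. simpl in Hge. lia.
  - intro k. destruct k; simpl; apply Hpick.
Qed.

Definition vtail {N} (x : vec (S N)) : vec N := fun i => x (Fin.FS i).

Definition vcons {N} (a : R) (v : vec N) : vec (S N) :=
  fun i => Fin.caseS' i (fun _ => R) a v.

Lemma vtail_vcons N a (v : vec N) : vtail (vcons a v) = v.
Proof. reflexivity. Qed.

Lemma vec_split_le N (x : vec (S N)) :
  Rabs (x Fin.F1) <= norm x /\ norm (vtail x) <= norm x.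
Proof.
  unfold norm, dot, vtail. simpl.
  pose proof (sumF_nonneg N (fun i => x (Fin.FS i) * x (Fin.FS i)) (fun i => Rle_0_sqr _)).
  pose proof (Rle_0_sqr (x Fin.F1)). unfold Rsqr in *. split.
  - rewrite <- sqrt_Rsqr_abs. apply sqrt_le_1_alt. unfold Rsqr. lra.
  - apply sqrt_le_1_alt. lra.
Qed.

Lemma dist_split N (x y : vec (S N)) :
  dist x y <= Rabs (x Fin.F1 - y Fin.F1) + dist (vtail x) (vtail y).
Proof.
  unfold dist, norm, dot, vsub, vtail. simpl.
  set (a := x Fin.F1 - y Fin.F1).
  set (b := sumF N (fun i => (x (Fin.FS i) - y (Fin.FS i)) * (x (Fin.FS i) - y (Fin.FS i)))).
  assert (Hb : 0 <= b) by (apply sumF_nonneg; intro; apply Rle_0_sqr).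
  pose proof (sqrt_pos b). pose proof (Rabs_pos a). pose proof (sqrt_sqrt b Hb).
  pose proof (Rsqr_abs a). unfold Rsqr in *.
  apply Rsqr_incr_0_var; [|nra]. unfold Rsqr. rewrite sqrt_sqrt by nra. nra.
Qed.

Lemma bolzano_weierstrass N (u : nat -> vec N) M : (forall n, norm (u n) <= M) ->
  exists phi l, increasing_seq phi /\ converges_to (fun k => u (phi k)) l.
Proof.
  revert u M. induction N as [|N IH]; intros u M HM.
  - exists (fun k => k), (fun _ => 0). split; [intro; lia|].
    intros eps Heps. exists O. intros. unfold dist, norm, dot. simpl. rewrite sqrt_0. exact Heps.
  - destruct (bolzano_weierstrass_R (fun k => u k Fin.F1) M) as [phi1 [l1 [Hphi1 Hl1]]].
    { intro n. eapply Rle_trans; [apply vec_split_le|apply HM]. }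
    destruct (IH (fun k => vtail (u (phi1 k))) M) as [phi2 [l2 [Hphi2 Hl2]]].
    { intro n. eapply Rle_trans; [apply vec_split_le|apply HM]. }
    exists (fun k => phi1 (phi2 k)), (vcons l1 l2).
    split; [apply increasing_seq_comp; assumption|].
    intros eps Heps.
    destruct (inv_succ_small (eps / 2)) as [K1 HK1]; [lra|].
    destruct (Hl2 (eps / 2)) as [K2 HK2]; [lra|].
    exists (max K1 K2). intros k Hk.
    eapply Rle_lt_trans; [apply dist_split|]. rewrite vtail_vcons.
    pose proof (increasing_seq_ge phi2 Hphi2 k).
    specialize (HK1 (phi2 k) ltac:(lia)). specialize (HK2 k ltac:(lia)).
    specialize (Hl1 (phi2 k)). simpl in *. lra.
Qed.

Lemma nearest_point_in_closure N (A : vec N -> Prop) M (y : vec N) a :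
  (forall x, A x -> norm x <= M) ->
  (forall eps, 0 < eps -> exists g, A g /\ dist y g < a + eps) ->
  exists l, closure A l /\ dist y l <= a.
Proof.
  intros HM Hnear.
  destruct (choice (fun n g => A g /\ dist y g < a + / INR (S n))) as [g Hg].
  { intro n. apply Hnear, Rinv_0_lt_compat, lt_0_INR. lia. }
  destruct (bolzano_weierstrass N g M) as [phi [l [Hphi Hl]]].
  { intro n. apply HM, Hg. }
  exists l. split.
  - intros eps Heps. destruct (Hl eps Heps) as [K HK].
    exists (g (phi K)). split; [apply Hg|]. rewrite dist_sym. apply HK. lia.
  - apply Rnot_lt_le. intro Hfar. set (e := dist y l - a).
    destruct (Hl (e / 2)) as [K1 HK1]; [unfold e; lra|].
    destruct (inv_succ_small (e / 2)) as [K2 HK2]; [unfold e; lra|].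
    set (k := max K1 K2).
    specialize (HK1 k ltac:(unfold k; lia)).
    pose proof (increasing_seq_ge phi Hphi k).
    specialize (HK2 (phi k) ltac:(unfold k in *; lia)).
    destruct (Hg (phi k)) as [_ Hyg].
    pose proof (dist_triangle N y (g (phi k)) l). unfold e in *. lra.
Qed.

Lemma dot_unit_shift N (v xi : vec N) t : norm xi = 1 ->
  dot (vadd v (vscale t xi)) (vadd v (vscale t xi)) = dot v v + 2 * t * dot v xi + t * t.
Proof.
  intro Hxi. rewrite dot_add_sq, !dot_scalel, !dot_scaler, <- (norm_sq N xi), Hxi. ring.
Qed.

Lemma refl_isometry N (xi : vec N) lam x y : norm xi = 1 ->
  dist (refl xi lam x) (refl xi lam y) = dist x y.
Proof.
  intro Hxi. unfold dist.
  replace (vsub (refl xi lam x) (refl xi lam y))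
    with (vadd (vsub x y) (vscale (- 2 * dot (vsub x y) xi) xi))
    by (rewrite dot_subl; unfold refl; vec_ext).
  unfold norm. f_equal. rewrite dot_unit_shift by exact Hxi. ring.
Qed.

Lemma refl_closer N (xi : vec N) lam x g : norm xi = 1 ->
  dot x xi > lam -> dot g xi <= lam -> dist (refl xi lam x) g <= dist x g.
Proof.
  intros Hxi Hx Hg. unfold dist.
  replace (vsub (refl xi lam x) g)
    with (vadd (vsub x g) (vscale (2 * (lam - dot x xi)) xi)) by (unfold refl; vec_ext).
  unfold norm. apply sqrt_le_1_alt.
  rewrite dot_unit_shift, (dot_subl N x g xi) by exact Hxi.
  assert (0 <= (dot x xi - lam) * (lam - dot g xi)) by (apply Rmult_le_pos; lra).
  nra.
Qed.

Lemma ball_center N (x : vec N) r : 0 < r -> ball x r x.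
Proof. intro Hr. unfold ball. rewrite dist_refl. exact Hr. Qed.

Lemma ball_nested N (x z : vec N) e : ball x e z ->
  exists e', 0 < e' /\ forall w, ball z e' w -> ball x e w.
Proof.
  unfold ball. intro Hz. exists (e - dist z x). split; [lra|].
  intros w Hw. pose proof (dist_triangle N w z x). lra.
Qed.

Lemma subset_closure N (A : vec N -> Prop) x : A x -> closure A x.
Proof. intros Hx eps Heps. exists x. rewrite dist_refl. split; assumption. Qed.

Lemma seg_closure N (A : vec N -> Prop) a b t :
  (forall eta, 0 < eta -> exists s, Rabs (s - t) < eta /\ A (seg a b s)) ->
  closure A (seg a b t).
Proof.
  intros Hnear eps Heps. pose proof (dist_nonneg N b a).
  destruct (Hnear (eps / (dist b a + 1))) as [s [Hst HA]]; [apply Rdiv_lt_0_compat; lra|].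
  exists (seg a b s). split; [exact HA|]. rewrite dist_sym. apply seg_near; assumption.
Qed.

(** A segment from a point of [A] to a point outside [A] meets the boundary
    of [A], at the supremum of the parameters up to which it stays in [A]. *)
Lemma segment_meets_boundary N (A : vec N -> Prop) a b :
  A a -> ~ A b -> exists t, 0 <= t <= 1 /\ boundary A (seg a b t).
Proof.
  intros Ha Hb.
  set (T := fun t => 0 <= t <= 1 /\ forall s, 0 <= s <= t -> A (seg a b s)).
  assert (T0 : T 0).
  { split; [lra|]. intros s Hs. replace s with 0 by lra. rewrite seg_0. exact Ha. }
  destruct (completeness T) as [ts [Hub Hlub]].
  { exists 1. intros t [Ht _]. lra. }
  { exists 0. exact T0. }
  assert (Hts : 0 <= ts <= 1) by (split; [apply Hub, T0|apply Hlub; intros t [Ht _]; lra]).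
  assert (Hbelow : forall s, 0 <= s < ts -> A (seg a b s)).
  { intros s Hs. apply NNPP. intro Hn. assert (ts <= s); [|lra].
    apply Hlub. intros t [_ Ht]. destruct (Rle_or_lt t s); [assumption|].
    exfalso. apply Hn, Ht. lra. }
  exists ts. split; [exact Hts|]. split; apply seg_closure; intros eta Heta.
  -
    destruct (Req_dec ts 0) as [H0|H0].
    { exists 0. rewrite H0, seg_0, Rminus_0_r, Rabs_R0. split; assumption. }
    set (s := ts - Rmin ts eta / 2).
    pose proof (Rmin_l ts eta). pose proof (Rmin_r ts eta). pose proof (Rmin_pos ts eta ltac:(lra) Heta).
    exists s. split; [rewrite Rabs_left; unfold s; lra|]. apply Hbelow. unfold s. lra.
  -
    destruct (classic (A (seg a b ts))) as [Hin|Hout].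
    2:{ exists ts. rewrite Rminus_diag, Rabs_R0. split; assumption. }
    assert (Hts1 : ts < 1).
    { destruct (Req_dec ts 1) as [E|]; [|lra]. rewrite E, seg_1 in Hin. contradiction. }
    set (t := ts + Rmin (1 - ts) eta / 2).
    pose proof (Rmin_l (1 - ts) eta). pose proof (Rmin_r (1 - ts) eta).
    pose proof (Rmin_pos (1 - ts) eta ltac:(lra) Heta).
    assert (Hout : exists s, 0 <= s <= t /\ ~ A (seg a b s)).
    { apply NNPP. intro Hno. assert (t <= ts); [|unfold t in *; lra].
      apply Hub. split; [unfold t; lra|]. intros s Hs.
      apply NNPP. intro Hn. apply Hno. exists s. split; assumption. }
    destruct Hout as [s [Hs HsA]].
    assert (Hts_s : ts < s).
    { destruct (Rtotal_order s ts) as [Hlt|[Heq|Hgt]]; [|subst s; contradiction|exact Hgt].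
      exfalso. apply HsA, Hbelow. lra. }
    exists s. split; [rewrite Rabs_right; unfold t in *; lra|exact HsA].
Qed.

Section Collar.

Variables (N : nat) (Omega G : vec N -> Prop) (delta : R).
Hypothesis delta_pos : 0 < delta.
Hypothesis closure_G_in_Omega : forall x, closure G x -> Omega x.
Hypothesis boundary_in_Gamma : forall x, boundary G x -> Gamma Omega delta x.

Definition collar (x : vec N) : Prop := exists g, G g /\ dist x g < delta.

Lemma collar_as_sum x :
  collar x <-> exists g y, G g /\ ball (fun _ => 0) delta y /\ x = vadd g y.
Proof.
  split.
  - intros [g [Hg Hxg]]. exists g, (vsub x g).
    assert (Hx : x = vadd g (vsub x g)) by vec_ext.
    split; [exact Hg|]. split; [|exact Hx].
    unfold ball. rewrite <- (dist_vadd_l N g), <- Hx. exact Hxg.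
  - intros [g [y [Hg [Hy Hx]]]]. exists g. split; [exact Hg|].
    rewrite Hx, dist_vadd_l. exact Hy.
Qed.

(** If reflection maps the cap [G_lam] into [G], it maps the cap of the
    collar into the collar: a point of [G] near [x] is either in the cap, and
    is reflected along with [x], or on the other side, and [x] moves closer to it. *)
Lemma collar_reflection xi lam x :
  norm xi = 1 -> (forall g, cap_part G xi lam g -> G (refl xi lam g)) ->
  collar x -> dot x xi > lam -> collar (refl xi lam x).
Proof.
  intros Hxi HGrefl [g [Hg Hxg]] Hx.
  destruct (Rlt_or_le lam (dot g xi)) as [Hg_cap|Hg_rest].
  - exists (refl xi lam g). split; [apply HGrefl; split; assumption|].
    rewrite refl_isometry; assumption.
  - exists g. split; [exact Hg|].
    eapply Rle_lt_trans; [apply refl_closer|]; eassumption.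
Qed.

Lemma collar_open : is_open collar.
Proof.
  intros x [g [Hg Hxg]].
  destruct (ball_nested N g x delta Hxg) as [e [He Hball]].
  exists e. split; [exact He|]. intros y Hy. exists g. split; [exact Hg|exact (Hball y Hy)].
Qed.

(** [G + B_delta(0)] lies in [Omega]: the segment from [g] in [G] to a point
    [w] outside [Omega] leaves [G] at a point of [Gamma_delta], whose distance
    to [w] is at least [delta] yet at most [|w - g|]. *)
Lemma collar_in_Omega x : collar x -> Omega x.
Proof.
  intros [g [Hg Hxg]]. apply NNPP. intro Hx.
  assert (HxG : ~ G x) by (intro; apply Hx, closure_G_in_Omega, subset_closure; assumption).
  destruct (segment_meets_boundary N G g x Hg HxG) as [t [Ht Hbd]].
  destruct (boundary_in_Gamma _ Hbd) as [_ [_ Hmin]].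
  specialize (Hmin x Hx).
  pose proof (dist_seg N g x t 1) as Hdist. rewrite seg_1, Rabs_left1 in Hdist by lra.
  pose proof (dist_nonneg N x g). nra.
Qed.

Lemma ball_collar c r x :
  0 < r -> (forall y, ball c r y -> G y) -> dist x c < r + delta -> collar x.
Proof.
  intros Hr HcG Hx. destruct (ball_sum N c x r delta Hr delta_pos Hx) as [g [Hgc Hxg]].
  exists g. split; [apply HcG; exact Hgc|exact Hxg].
Qed.

(** Let [B_r(c)] in [G] touch [p].  A point [q] at distance [delta] from [p]
    but off the collar lies beyond [B_{r+delta}(c)], hence, by the equality
    case of Cauchy-Schwarz, on the ray from [c] through [p]. *)
Lemma off_collar_on_ray c r p q :
  0 < r -> (forall y, ball c r y -> G y) -> dist p c = r ->
  ~ collar q -> dist q p = delta ->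
  vscale delta (vsub p c) = vscale r (vsub q p).
Proof.
  intros Hr HcG Hpc Hq Hqp.
  assert (Hfar : r + delta <= dist q c)
    by (apply Rnot_lt_le; intro; apply Hq; apply (ball_collar c r); assumption).
  assert (Hsplit : vsub q c = vadd (vsub q p) (vsub p c)) by vec_ext.
  pose proof (norm_sq N (vsub q c)) as Hqc. fold (dist q c) in Hqc.
  rewrite Hsplit, dot_add_sq, <- (norm_sq N (vsub q p)), <- (norm_sq N (vsub p c)) in Hqc.
  fold (dist q p) (dist p c) in Hqc. rewrite Hqp, Hpc in Hqc.
  apply cauchy_schwarz_eq; [exact Hpc|exact Hqp|].
  rewrite dot_sym. nra.
Qed.

(** Tangency argument: if [p] is touched from inside by a ball in [G] and
    from outside by a point [z] of the complement of [Omega] at distance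
    [delta], every other point of [Omega] at distance [delta] from [p] is in
    the collar, since both would lie on the same ray at the same distance. *)
Lemma tangent_point_collar c r p z y :
  0 < r -> (forall x, ball c r x -> G x) -> dist p c = r ->
  ~ Omega z -> dist p z = delta -> Omega y -> dist y p = delta -> collar y.
Proof.
  intros Hr HcG Hpc Hz Hpz Hy Hyp. apply NNPP. intro Hny.
  assert (Hnz : ~ collar z) by (intro; apply Hz, collar_in_Omega; assumption).
  rewrite dist_sym in Hpz.
  pose proof (off_collar_on_ray c r p z Hr HcG Hpc Hnz Hpz) as Hzray.
  pose proof (off_collar_on_ray c r p y Hr HcG Hpc Hny Hyp) as Hyray.
  assert (Hzy : z = y).
  { apply functional_extensionality. intro i.
    apply (f_equal (fun v => v i)) in Hzray, Hyray. unfold vscale, vsub in *.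
    apply (Rmult_eq_reg_l r); [|lra]. lra. }
  apply Hz. rewrite Hzy. exact Hy.
Qed.

Hypothesis Omega_bounded : is_bounded Omega.
Hypothesis G_open : is_open G.
Hypothesis G_interior_sphere : interior_sphere G.

(** Points of [Omega] off the collar have a neighbourhood off the collar.
    Otherwise such a [y] has distance exactly [delta] to [G], attained at a
    point [l] of the closure of [G]; [l] cannot lie in the open set [G], so it
    is a boundary point, i.e. a point of [Gamma_delta], and the tangency
    argument puts [y] in the collar. *)
Lemma off_collar_open y : Omega y -> ~ collar y ->
  exists e, 0 < e /\ forall z, ball y e z -> ~ collar z.
Proof.
  intros Hy Hny. apply NNPP. intro Hno.
  assert (Hnear : forall eps, 0 < eps -> exists g, G g /\ dist y g < delta + eps).
  { intros eps Heps. apply NNPP. intro Hfar. apply Hno. exists eps. split; [exact Heps|].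
    intros z Hz [g [Hg Hzg]]. apply Hfar. exists g. split; [exact Hg|].
    unfold ball in Hz. rewrite dist_sym in Hz. pose proof (dist_triangle N y z g). lra. }
  destruct Omega_bounded as [M HM].
  destruct (nearest_point_in_closure N G M y delta) as [l [Hl Hyl]]; [|exact Hnear|].
  { intros x Hx. apply HM, closure_G_in_Omega, subset_closure. exact Hx. }
  assert (Hyl_eq : dist y l = delta).
  { destruct (Rle_lt_or_eq_dec _ _ Hyl) as [Hlt|]; [exfalso|assumption].
    destruct (Hl (delta - dist y l)) as [g [Hg Hlg]]; [lra|].
    apply Hny. exists g. split; [exact Hg|]. pose proof (dist_triangle N y l g). lra. }
  destruct (classic (G l)) as [HGl|HnGl].
  - destruct (G_open l HGl) as [r [Hr Hball]].
    apply Hny, (ball_collar l r); [exact Hr|exact Hball|lra].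
  - assert (Hbd : boundary G l) by (split; [exact Hl|apply subset_closure; exact HnGl]).
    destruct (boundary_in_Gamma l Hbd) as [_ [[z [Hz Hlz]] _]].
    destruct (G_interior_sphere l Hbd) as [c [r [Hr [HcG Hlc]]]].
    exact (Hny (tangent_point_collar c r l z y Hr HcG Hlc Hz Hlz Hy Hyl_eq)).
Qed.

Hypothesis Omega_connected : is_connected Omega.
Hypothesis G_nonempty : exists g, G g.

(** [Omega] is the collar: the collar and the interior of its complement are
    disjoint open sets covering the connected set [Omega], and the collar is
    nonempty. *)
Lemma Omega_eq_collar x : Omega x <-> collar x.
Proof.
  split; [|apply collar_in_Omega]. intro Hx. apply NNPP. intro Hnx.
  apply Omega_connected.
  exists collar, (fun y => exists e, 0 < e /\ forall z, ball y e z -> ~ collar z).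
  split; [exact collar_open|]. split; [|split; [|split; [|split]]].
  - intros y [e [He Hball]]. exists e. split; [exact He|]. intros z Hz.
    destruct (ball_nested N y z e Hz) as [e' [He' Hsub]].
    exists e'. split; [exact He'|]. intros w Hw. apply Hball, Hsub, Hw.
  - intros y Hy. destruct (classic (collar y)) as [Hc|Hnc]; [left; exact Hc|].
    right. apply off_collar_open; assumption.
  - destruct G_nonempty as [g Hg]. exists g. split.
    + apply closure_G_in_Omega, subset_closure. exact Hg.
    + exists g. split; [exact Hg|]. rewrite dist_refl. exact delta_pos.
  - exists x. split; [exact Hx|]. apply off_collar_open; assumption.
  - intros y _ Hc [e [He Hball]]. exact (Hball y (ball_center N y e He) Hc).
Qed.

End Collar.

Theorem lemma2p8 (N : nat) (Omega G : vec N -> Prop) (delta : R) :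
  is_domain Omega -> is_bounded Omega -> 0 < delta ->
  is_domain G -> (forall x, closure G x -> Omega x) ->
  C1_boundary G -> interior_sphere G ->
  (forall x, boundary G x <-> Gamma Omega delta x) ->
  (forall x, Omega x <->
     exists g y, G g /\ ball (fun _ => 0) delta y /\ x = vadd g y)
  /\
  (forall (xi : vec N) (lambda : R), norm xi = 1 ->
     (forall x, cap_part G xi lambda x -> G (refl xi lambda x)) ->
     (forall x, cap_part Omega xi lambda x -> Omega (refl xi lambda x))).
Proof.
  intros [_ [_ HOconn]] HObd Hdelta [HGopen [HGne _]] HGcl _ HGsphere HGamma.
  assert (HOmega : forall x, Omega x <-> collar N G delta x).
  { intro x. apply (Omega_eq_collar N Omega G delta); try assumption.
    intros y Hy. apply HGamma, Hy. }
  split.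
  - intro x. rewrite HOmega. apply collar_as_sum.
  - intros xi lam Hxi HGrefl x [Hx Hcap]. apply HOmega.
    apply collar_reflection; [exact Hxi|exact HGrefl|apply HOmega, Hx|exact Hcap].
Qed.
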